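(* Let $G$ be a multiplicative monoid with identity, let $N$ be a $G$-graded near-ring and let $P$, $I$ be graded ideals of $N$ with $I\subseteq P$. Let $\pi:N\to\bar N:=N/I$ be the canonical epimorphism. If $P$ is a graded almost prime ideal of $N$, then $\pi(P)$ is a graded almost prime ideal of $\bar N$.
   Context: A near-ring $(N,+,\cdot)$ is a set with two binary operations such that $(N,+)$ is a group (not necessarily abelian), $(N,\cdot)$ is a semigroup, and $(a+b)y = ay+by$ for all $a,b,y\in N$. For a multiplicative monoid $G$ with identity, $N$ is a $G$-graded near-ring if there is a family $\{N_\sigma\}_{\sigma\in G}$ of additive normal subgroups of $N$ with $N=\bigoplus_{\sigma\in G}N_\sigma$ and $N_\sigma N_\tau\subseteq N_{\sigma\tau}$. An ideal $P$ is graded if $P=\bigoplus_{\sigma}(P\cap N_\sigma)$; for a graded ideal $I$, $N/I$ is $G$-graded with components $(N_\sigma+I)/I$. For ideals $I,J$, $IJ$ denotes their product and $P^2=PP$ (the paper writes $P^2\cap N$, with $N$ the ambient near-ring). A graded ideal $P$ is graded almost prime if for all graded ideals $I,J$ with $IJ\subseteq P$ and $IJ\not\subseteq P^2\cap N$, either $I\subseteq P$ or $J\subseteq P$. *)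

From Stdlib Require Import List.
Import ListNotations.
Set Implicit Arguments.

Record nearring := NearRing {
  nr_car :> Type;
  nr_add : nr_car -> nr_car -> nr_car;
  nr_zero : nr_car;
  nr_opp : nr_car -> nr_car;
  nr_mul : nr_car -> nr_car -> nr_car;
  nr_addA : forall a b c, nr_add a (nr_add b c) = nr_add (nr_add a b) c;
  nr_add0l : forall a, nr_add nr_zero a = a;
  nr_add0r : forall a, nr_add a nr_zero = a;
  nr_addNl : forall a, nr_add (nr_opp a) a = nr_zero;
  nr_addNr : forall a, nr_add a (nr_opp a) = nr_zero;
  nr_mulA : forall a b c, nr_mul a (nr_mul b c) = nr_mul (nr_mul a b) c;
  nr_mulDl : forall a b y, nr_mul (nr_add a b) y = nr_add (nr_mul a y) (nr_mul b y)
}.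

Arguments nr_add {n}.
Arguments nr_zero {n}.
Arguments nr_opp {n}.
Arguments nr_mul {n}.

Record monoid := Monoid {
  m_car :> Type;
  m_mul : m_car -> m_car -> m_car;
  m_one : m_car;
  m_mulA : forall a b c, m_mul a (m_mul b c) = m_mul (m_mul a b) c;
  m_mul1l : forall a, m_mul m_one a = a;
  m_mul1r : forall a, m_mul a m_one = a
}.

Arguments m_mul {m}.
Arguments m_one {m}.

Section NR.
Variable N : nearring.

Definition subset (A B : N -> Prop) : Prop := forall x, A x -> B x.

Definition normal_subgroup (A : N -> Prop) : Prop :=
  A nr_zero /\
  (forall a b, A a -> A b -> A (nr_add a b)) /\
  (forall a, A a -> A (nr_opp a)) /\
  (forall n a, A a -> A (nr_add (nr_add n a) (nr_opp n))).

Definition ideal (I : N -> Prop) : Prop :=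
  normal_subgroup I /\
  (forall i n, I i -> I (nr_mul i n)) /\
  (forall n n' i, I i -> I (nr_add (nr_mul n (nr_add n' i)) (nr_opp (nr_mul n n')))).

Definition fsum (l : list N) : N := fold_right (@nr_add N) nr_zero l.

Definition prod_set (A B : N -> Prop) : N -> Prop :=
  fun x => exists a b, A a /\ B b /\ x = nr_mul a b.

Variable G : monoid.

Definition sum_of (F : G -> N -> Prop) (x : N) : Prop :=
  exists l : list (G * N),
    Forall (fun p => F (fst p) (snd p)) l /\ x = fsum (map snd l).

(* N = ⊕_σ N_σ is a G-graded near-ring: the N_σ are normal subgroups,
   N is their internal direct sum (every element is a finite sum of
   homogeneous elements, and N_σ meets the sum of the other components
   trivially), and N_σ N_τ ⊆ N_{στ}. *)
Definition graded (comp : G -> N -> Prop) : Prop :=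
  (forall s, normal_subgroup (comp s)) /\
  (forall x, sum_of comp x) /\
  (forall s x, comp s x -> sum_of (fun t y => t <> s /\ comp t y) x -> x = nr_zero) /\
  (forall s t a b, comp s a -> comp t b -> comp (m_mul s t) (nr_mul a b)).

Definition graded_ideal (comp : G -> N -> Prop) (P : N -> Prop) : Prop :=
  ideal P /\ (forall x, P x -> sum_of (fun s y => comp s y /\ P y) x).

Definition graded_almost_prime (comp : G -> N -> Prop) (P : N -> Prop) : Prop :=
  graded_ideal comp P /\
  forall I J, graded_ideal comp I -> graded_ideal comp J ->
    subset (prod_set I J) P -> ~ subset (prod_set I J) (prod_set P P) ->
    subset I P \/ subset J P.

End NR.

Arguments subset {N}.
Arguments normal_subgroup {N}.
Arguments ideal {N}.
Arguments fsum {N}.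
Arguments prod_set {N}.
Arguments sum_of {N G}.
Arguments graded {N G}.
Arguments graded_ideal {N G}.
Arguments graded_almost_prime {N G}.

Definition nr_hom {N M : nearring} (f : N -> M) : Prop :=
  (forall a b, f (nr_add a b) = nr_add (f a) (f b)) /\
  (forall a b, f (nr_mul a b) = nr_mul (f a) (f b)).

Definition image {N M : nearring} (f : N -> M) (A : N -> Prop) : M -> Prop :=
  fun y => exists x, A x /\ f x = y.

Definition image_grading {G : monoid} {N M : nearring} (f : N -> M)
  (comp : G -> N -> Prop) : G -> M -> Prop :=
  fun s => image f (comp s).

(* Pulling back along the quotient map pi : N -> N/I turns graded ideals of
   N/I into graded ideals of N: an element of pi^-1(K) agrees, modulo I, with
   a sum of homogeneous elements of pi^-1(K), and the error term decomposes
   homogeneously because I is graded.  Since the kernel I lies in P, the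
   ideal P is saturated, pi^-1(pi(P)) = P, so a product I'J' inside pi(P)
   pulls back to a product inside P.  Because pi(AB) = pi(A)pi(B), the
   "almost" condition transfers as well, and almost primeness of P for the
   pulled-back ideals pushes forward to pi(P). *)

From Stdlib Require Import List FinFun.
Import ListNotations.

Set Implicit Arguments.
Unset Strict Implicit.

Definition preimage {N M : nearring} (f : N -> M) (B : M -> Prop) : N -> Prop :=
  fun x => B (f x).

Lemma subset_trans {N : nearring} (A B C : N -> Prop) :
  subset A B -> subset B C -> subset A C.
Proof. intros AB BC x Ax. exact (BC x (AB x Ax)). Qed.

Lemma image_subset {N M : nearring} (f : N -> M) (A B : N -> Prop) :
  subset A B -> subset (image f A) (image f B).
Proof. intros AB y [x [Ax <-]]. exists x. auto. Qed.

Lemma image_preimage {N M : nearring} (f : N -> M) (B : M -> Prop) :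
  Surjective f -> subset B (image f (preimage f B)).
Proof. intros f_surj y By. destruct (f_surj y) as [x <-]. exists x. auto. Qed.

Section NearRing.
Variable N : nearring.

Lemma nr_idem_eq0 (x : N) : nr_add x x = x -> x = nr_zero.
Proof.
  intro xx. rewrite <- (nr_addNl _ x). rewrite <- xx at 3.
  now rewrite nr_addA, nr_addNl, nr_add0l.
Qed.

Lemma nr_subrK (x y : N) : nr_add (nr_add x (nr_opp y)) y = x.
Proof. now rewrite <- nr_addA, nr_addNl, nr_add0r. Qed.

Lemma fsum_app (l1 l2 : list N) : fsum (l1 ++ l2) = nr_add (fsum l1) (fsum l2).
Proof.
  induction l1 as [|a l1 IH]; simpl.
  - now rewrite nr_add0l.
  - unfold fsum in *; simpl. now rewrite IH, nr_addA.
Qed.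

Variable G : monoid.

Lemma sum_of_sub (F F' : G -> N -> Prop) (x : N) :
  (forall s y, F s y -> F' s y) -> sum_of F x -> sum_of F' x.
Proof.
  intros FF' [l [Fl ->]]. exists l. split; [|reflexivity].
  eapply Forall_impl; [|exact Fl]. intros p. apply FF'.
Qed.

Lemma sum_of_add (F : G -> N -> Prop) (x y : N) :
  sum_of F x -> sum_of F y -> sum_of F (nr_add x y).
Proof.
  intros [l [Fl ->]] [m [Fm ->]]. exists (l ++ m). split.
  - now apply Forall_app.
  - now rewrite map_app, fsum_app.
Qed.

End NearRing.

Section Hom.
Variables (N M : nearring) (f : N -> M).
Hypothesis f_hom : nr_hom f.

Let f_add := proj1 f_hom.
Let f_mul := proj2 f_hom.

Lemma nr_hom0 : f nr_zero = nr_zero.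
Proof. apply nr_idem_eq0. now rewrite <- f_add, nr_add0l. Qed.

Lemma nr_homN (a : N) : f (nr_opp a) = nr_opp (f a).
Proof.
  assert (inv_l : nr_add (f (nr_opp a)) (f a) = nr_zero)
    by now rewrite <- f_add, nr_addNl, nr_hom0.
  rewrite <- (nr_add0r _ (f (nr_opp a))), <- (nr_addNr _ (f a)), nr_addA, inv_l.
  apply nr_add0l.
Qed.

Lemma nr_hom_fsum (l : list N) : f (fsum l) = fsum (map f l).
Proof.
  induction l as [|a l IH]; simpl.
  - exact nr_hom0.
  - unfold fsum in *; simpl. now rewrite f_add, IH.
Qed.

Lemma ideal_preimage (K : M -> Prop) : ideal K -> ideal (preimage f K).
Proof.
  intros [[K0 [KD [KN Kconj]]] [KMr Kmul]]; unfold preimage.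
  split; [split; [|split; [|split]]|split].
  - now rewrite nr_hom0.
  - intros a b Ka Kb. rewrite f_add. auto.
  - intros a Ka. rewrite nr_homN. auto.
  - intros n a Ka. rewrite f_add, f_add, nr_homN. auto.
  - intros i n Ki. rewrite f_mul. auto.
  - intros n n' i Ki. rewrite f_add, nr_homN, f_mul, f_mul, f_add. auto.
Qed.

Lemma preimage_prod_set (A B : M -> Prop) :
  subset (prod_set (preimage f A) (preimage f B)) (preimage f (prod_set A B)).
Proof.
  intros x [a [b [Aa [Bb ->]]]]. exists (f a), (f b). now rewrite f_mul.
Qed.

Lemma image_prod_set (A B : N -> Prop) :
  subset (image f (prod_set A B)) (prod_set (image f A) (image f B)).
Proof.
  intros y [x [[a [b [Aa [Bb ->]]]] <-]].
  exists (f a), (f b). split; [exists a; auto|]. split; [exists b; auto|].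
  apply f_mul.
Qed.

Variable G : monoid.

Lemma sum_of_image (F : G -> N -> Prop) (x : N) :
  sum_of F x -> sum_of (fun s => image f (F s)) (f x).
Proof.
  intros [l [Fl ->]]. exists (map (fun p => (fst p, f (snd p))) l). split.
  - apply Forall_map. eapply Forall_impl; [|exact Fl].
    intros p Fp. exists (snd p). auto.
  - now rewrite nr_hom_fsum, !map_map.
Qed.

Lemma sum_of_image_lift (F : G -> N -> Prop) (y : M) :
  sum_of (fun s => image f (F s)) y -> exists x, sum_of F x /\ f x = y.
Proof.
  intros [l [Fl ->]]. induction Fl as [|[s z] l fz _ IH].
  - exists nr_zero. split; [exists []; auto|]. exact nr_hom0.
  - simpl in fz. destruct fz as [x [Fx <-]], IH as [x' [[l' [Fl' ->]] fx']].
    exists (nr_add x (fsum (map snd l'))). split.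
    + exists ((s, x) :: l'). auto.
    + simpl. now rewrite f_add, fx'.
Qed.

Section Surjective.
Hypothesis f_surj : Surjective f.

Lemma prod_set_image_preimage (A B : M -> Prop) :
  subset (prod_set A B) (image f (prod_set (preimage f A) (preimage f B))).
Proof.
  intros y [a' [b' [Aa [Bb ->]]]].
  destruct (f_surj a') as [a <-]. destruct (f_surj b') as [b <-].
  exists (nr_mul a b). split; [exists a, b; auto|]. apply f_mul.
Qed.

Lemma ideal_image (A : N -> Prop) : ideal A -> ideal (image f A).
Proof.
  intros [[A0 [AD [AN Aconj]]] [AMr Amul]].
  split; [split; [|split; [|split]]|split].
  - exists nr_zero. split; [exact A0 | exact nr_hom0].
  - intros _ _ [a [Aa <-]] [b [Ab <-]]. exists (nr_add a b). auto.
  - intros _ [a [Aa <-]]. exists (nr_opp a). split; auto. apply nr_homN.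
  - intros n' _ [a [Aa <-]]. destruct (f_surj n') as [n <-].
    exists (nr_add (nr_add n a) (nr_opp n)). split; auto.
    now rewrite f_add, f_add, nr_homN.
  - intros _ n' [i [Ai <-]]. destruct (f_surj n') as [n <-].
    exists (nr_mul i n). auto.
  - intros m' n' _ [i [Ai <-]].
    destruct (f_surj m') as [m <-]. destruct (f_surj n') as [n <-].
    exists (nr_add (nr_mul m (nr_add n i)) (nr_opp (nr_mul m n))). split; auto.
    now rewrite f_add, nr_homN, f_mul, f_mul, f_add.
Qed.

Lemma graded_ideal_image (comp : G -> N -> Prop) (A : N -> Prop) :
  graded_ideal comp A -> graded_ideal (image_grading f comp) (image f A).
Proof.
  intros [A_ideal A_graded]. split; [now apply ideal_image|].
  intros _ [x [Ax <-]]. eapply sum_of_sub; [|exact (sum_of_image (A_graded x Ax))].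
  intros s _ [y [[comp_y Ay] <-]]. split; exists y; auto.
Qed.

End Surjective.

Section Kernel.
Variables (comp : G -> N -> Prop) (I : N -> Prop).
Hypothesis f_ker : forall x, f x = nr_zero <-> I x.

Lemma graded_ideal_preimage (K : M -> Prop) :
  graded_ideal comp I ->
  graded_ideal (image_grading f comp) K -> graded_ideal comp (preimage f K).
Proof.
  intros [_ I_graded] [K_ideal K_graded].
  split; [now apply ideal_preimage|].
  intros x Kx.
  assert (lift_sum : sum_of (fun s => image f (fun y => comp s y /\ K (f y))) (f x)).
  { eapply sum_of_sub; [|exact (K_graded _ Kx)].
    intros s _ [[y [comp_y <-]] Ky]. exists y. auto. }
  destruct (sum_of_image_lift lift_sum) as [x0 [x0_sum fx0]].
  assert (I_err : I (nr_add x (nr_opp x0))).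
  { apply f_ker. now rewrite f_add, nr_homN, fx0, nr_addNr. }
  rewrite <- (nr_subrK x x0). apply sum_of_add; [|exact x0_sum].
  eapply sum_of_sub; [|exact (I_graded _ I_err)].
  intros s y [comp_y Iy]. split; [exact comp_y|].
  destruct K_ideal as [[K0 _] _]. unfold preimage.
  now rewrite (proj2 (f_ker y) Iy).
Qed.

Lemma preimage_image_subset (P : N -> Prop) :
  normal_subgroup P -> subset I P -> subset (preimage f (image f P)) P.
Proof.
  intros [_ [PD _]] IP a [p [Pp fp]].
  rewrite <- (nr_subrK a p). apply PD; [|exact Pp].
  apply IP, f_ker. now rewrite f_add, nr_homN, fp, nr_addNr.
Qed.

End Kernel.
End Hom.

Theorem theorem14 (G : monoid) (N Nbar : nearring) (comp : G -> N -> Prop)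
  (P I : N -> Prop) (pi : N -> Nbar) :
  graded comp ->
  graded_ideal comp P -> graded_ideal comp I -> subset I P ->
  (* pi : N -> Nbar is the canonical epimorphism onto Nbar = N/I:
     a surjective near-ring homomorphism with kernel exactly I;
     Nbar carries the induced grading Nbar_σ = pi(N_σ) = (N_σ + I)/I. *)
  nr_hom pi -> (forall y : Nbar, exists x, pi x = y) ->
  (forall x, pi x = nr_zero <-> I x) ->
  graded_almost_prime comp P ->
  graded_almost_prime (image_grading pi comp) (image pi P).
Proof.
  intros _ _ I_graded IP pi_hom pi_surj pi_ker [P_graded P_almost_prime].
  split; [now apply graded_ideal_image|].
  intros I' J' I'_graded J'_graded I'J'_P I'J'_nPP.
  pose proof (graded_ideal_preimage pi_hom pi_ker I_graded I'_graded) as A_graded.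
  pose proof (graded_ideal_preimage pi_hom pi_ker I_graded J'_graded) as B_graded.
  assert (P_saturated : subset (preimage pi (image pi P)) P).
  { apply (preimage_image_subset pi_hom pi_ker); [apply P_graded | exact IP]. }
  destruct (P_almost_prime _ _ A_graded B_graded) as [AP | BP].
  - intros x ABx. apply P_saturated, I'J'_P, (preimage_prod_set pi_hom), ABx.
  - intro AB_PP. apply I'J'_nPP.
    eapply subset_trans; [apply (prod_set_image_preimage pi_hom pi_surj)|].
    eapply subset_trans; [apply (image_subset AB_PP)|].
    apply (image_prod_set pi_hom).
  - left. eapply subset_trans; [apply (image_preimage pi_surj)|]. now apply image_subset.
  - right. eapply subset_trans; [apply (image_preimage pi_surj)|]. now apply image_subset.
Qed.
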